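(* Let $E$ be a congruence on $\overline{\boldsymbol{T}(X_1,\ldots,X_n)}$, $F$ a congruence on $\overline{\boldsymbol{T}(Y_1,\ldots,Y_m)}$, $V:=\boldsymbol{V}(E)$, $W:=\boldsymbol{V}(F)$, and let $\psi:\overline{\boldsymbol{T}(X_1,\ldots,X_n)}/E\to\overline{\boldsymbol{T}(Y_1,\ldots,Y_m)}/F$ be a $\boldsymbol{T}$-algebra homomorphism. For every $f\in\overline{\boldsymbol{T}(X_1,\ldots,X_n)}/E$: (1) $\sup\{f(x)\mid x\in V\}\ge\sup\{\psi(f)(y)\mid y\in W\}$; (2) $\inf\{f(x)\mid x\in V\}\le\inf\{\psi(f)(y)\mid y\in W\}$. Moreover, if $W$ is nonempty, $\psi$ is injective and $F=\boldsymbol{E}(W)$, then equality holds in both (1) and (2).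
   Context: $\boldsymbol{T}=\mathbb{R}\cup\{-\infty\}$ with $a\oplus b=\max\{a,b\}$, $a\odot b=a+b$. $\overline{\boldsymbol{T}[X_1,\ldots,X_n]}$ is the tropical polynomial semiring modulo identifying polynomials defining the same function $\boldsymbol{T}^n\to\boldsymbol{T}$; it is cancellative and $\overline{\boldsymbol{T}(X_1,\ldots,X_n)}$ is its semifield of fractions. Each element defines a function $\mathbb{R}^n\to\boldsymbol{T}$ (quotients evaluated as differences). $\boldsymbol{T}$-algebras are semirings with a semiring homomorphism from $\boldsymbol{T}$; homomorphisms are compatible semiring homomorphisms. A congruence is an equivalence relation compatible with both operations. $\boldsymbol{V}(E)=\{x\in\mathbb{R}^n\mid f(x)=g(x)\ \forall(f,g)\in E\}$; for $W\subset\mathbb{R}^m$, $\boldsymbol{E}(W)=\{(f,g)\mid f(y)=g(y)\ \forall y\in W\}$. An element of the quotient by $E$ (resp. $F$) is evaluated at points of $\boldsymbol{V}(E)$ (resp. $\boldsymbol{V}(F)$) via any representative; suprema and infima are taken in $\boldsymbol{T}\cup\{+\infty\}$. *)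

From HB Require Import structures.
From mathcomp Require Import all_boot all_order all_algebra.
From mathcomp Require Import all_classical all_reals.
From mathcomp Require Import ereal Rstruct.
From Stdlib Require Rdefinitions.
Notation R := Rdefinitions.R.
Set Implicit Arguments. Unset Strict Implicit. Unset Printing Implicit Defensive.
Import Order.TTheory GRing.Theory Num.Theory.
Local Open Scope ring_scope.
Local Open Scope ereal_scope.
Local Open Scope classical_set_scope.

(* The tropical semifield T = R ∪ {-oo} is realised inside \bar R (no +oo is
   ever used as a value of T); ⊕ = max, ⊙ = +. Points of R^n are 'I_n -> R. *)
Definition pt (n : nat) := 'I_n -> R.
Definition tfun (n : nat) := pt n -> \bar R.

Definition is_trop_scalar (c : \bar R) : Prop := c <> +oo.

Definition trop_poly (n : nat) (p : tfun n) : Prop :=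
  exists s : seq (R * ('I_n -> nat)),
    forall x : pt n,
      p x = \big[maxe/-oo]_(m <- s) ((m.1 + \sum_(i < n) ((m.2 i)%:R * x i))%R)%:E.

(* elements of the semifield of fractions of \bar{T[X_1..X_n]}, as functions
   R^n -> T : p/q with q a nonzero tropical polynomial, evaluated as p - q.
   Two fractions are equal in the semifield iff they define the same function. *)
Definition trop_rat (n : nat) (f : tfun n) : Prop :=
  exists p q : tfun n, [/\ trop_poly p, trop_poly q, q <> (fun _ => -oo)
                         & forall x, f x = p x - q x].

Definition tadd (n : nat) (f g : tfun n) : tfun n := fun x => maxe (f x) (g x).
Definition tmul (n : nat) (f g : tfun n) : tfun n := fun x => f x + g x.
Definition tcst (n : nat) (c : \bar R) : tfun n := fun _ => c.

Definition congruence (n : nat) (E : tfun n -> tfun n -> Prop) : Prop :=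
  (forall f g, E f g -> trop_rat f /\ trop_rat g) /\
  [/\ (forall f, trop_rat f -> E f f),
      (forall f g, E f g -> E g f),
      (forall f g h, E f g -> E g h -> E f h),
      (forall f f' g g', E f f' -> E g g' -> E (tadd f g) (tadd f' g'))
    & (forall f f' g g', E f f' -> E g g' -> E (tmul f g) (tmul f' g'))].

Definition tvar (n : nat) (E : tfun n -> tfun n -> Prop) : set (pt n) :=
  [set x | forall f g, E f g -> f x = g x].

Definition tideal (m : nat) (W : set (pt m)) : tfun m -> tfun m -> Prop :=
  fun f g => [/\ trop_rat f, trop_rat g & forall y, W y -> f y = g y].

(* A T-algebra homomorphism psi : \bar{T(X)}/E -> \bar{T(Y)}/F, given by a map
   phi on representatives (phi f is a representative of psi [f]). *)
Definition talg_hom_quot (n m : nat) (E : tfun n -> tfun n -> Prop)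
    (F : tfun m -> tfun m -> Prop) (phi : tfun n -> tfun m) : Prop :=
  [/\ (forall f, trop_rat f -> trop_rat (phi f)),
      (forall f g, E f g -> F (phi f) (phi g)),
      (forall f g, trop_rat f -> trop_rat g ->
          F (phi (tadd f g)) (tadd (phi f) (phi g))),
      (forall f g, trop_rat f -> trop_rat g ->
          F (phi (tmul f g)) (tmul (phi f) (phi g)))
    & (forall c, is_trop_scalar c -> F (phi (@tcst n c)) (@tcst m c))].

Definition hom_quot_injective (n m : nat) (E : tfun n -> tfun n -> Prop)
    (F : tfun m -> tfun m -> Prop) (phi : tfun n -> tfun m) : Prop :=
  forall f g, trop_rat f -> trop_rat g -> F (phi f) (phi g) -> E f g.

From HB Require Import structures.
From mathcomp Require Import all_boot all_order all_algebra.
From mathcomp Require Import all_classical all_reals.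
From mathcomp Require Import ereal Rstruct.
Import Order.TTheory GRing.Theory Num.Theory.
Local Open Scope ereal_scope.
Local Open Scope classical_set_scope.
Set Implicit Arguments. Unset Strict Implicit.

(* A map ev from tropical rational functions to T that respects max, + and
   constants is evaluation at the point x with x_i = ev(X_i): ev(X_i) is
   finite since ev(X_i) + ev(-X_i) = ev(0) = 0, and every rational function
   is built from the X_i and constants by these operations.  For y in W,
   g |-> psi(g)(y) is such a map, and its point lies in V; hence every value
   of psi(f) on W is a value of f on V, which gives (1) and (2).
   Conversely, if F = E(W) and psi is injective, then psi(f) <= psi(g) on W
   forces f <= g on V (apply injectivity to f (+) g and g); taking g, resp. f,
   to be the constant sup, resp. inf, of psi(f) over W gives equality. *)

Lemma bigmaxeDl (I : Type) (r : seq I) (F : I -> \bar R) (y : \bar R) :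
  (\big[maxe/-oo]_(i <- r) F i) + y = \big[maxe/-oo]_(i <- r) (F i + y).
Proof.
elim: r => [|i r IH]; first by rewrite !big_nil addNye.
by rewrite !big_cons adde_maxl IH.
Qed.

Lemma bigmaxeDr (I : Type) (r : seq I) (F : I -> \bar R) (y : \bar R) :
  y + \big[maxe/-oo]_(i <- r) F i = \big[maxe/-oo]_(i <- r) (y + F i).
Proof. by rewrite addeC bigmaxeDl; under eq_bigr do rewrite addeC. Qed.

Lemma addeKB (u : \bar R) (a b : R) : u + b%:E - (a%:E + b%:E) = u - a%:E.
Proof. by rewrite -EFinD -addeA -EFinB opprD addrCA subrr addr0. Qed.

Lemma addeBB (u v : \bar R) (a b : R) :
  (u - a%:E) + (v - b%:E) = (u + v) - (a%:E + b%:E).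
Proof. by rewrite addeACA oppeD. Qed.

Section TropicalPolynomials.
Variable n : nat.

Definition trop_var (i : 'I_n) : tfun n := fun x => (x i)%:E.

Definition trop_monomial (c : R) (a : 'I_n -> nat) : tfun n :=
  fun x => ((c + \sum_(i < n) ((a i)%:R * x i))%R)%:E.

Definition trop_poly_of (s : seq (R * ('I_n -> nat))) : tfun n :=
  fun x => \big[maxe/-oo]_(m <- s) trop_monomial m.1 m.2 x.

Lemma trop_polyP (p : tfun n) : trop_poly p <-> exists s, p = trop_poly_of s.
Proof. by split=> -[s hs]; exists s; [apply: funext | rewrite hs]. Qed.

Lemma trop_poly_of_poly s : trop_poly (trop_poly_of s).
Proof. by apply/trop_polyP; exists s. Qed.

Lemma trop_poly_of_nil : trop_poly_of [::] = tcst -oo.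
Proof. by apply: funext => x; rewrite /trop_poly_of big_nil. Qed.

Lemma trop_poly_of_cons m s :
  trop_poly_of (m :: s) = tadd (trop_monomial m.1 m.2) (trop_poly_of s).
Proof. by apply: funext => x; rewrite /trop_poly_of big_cons. Qed.

Lemma trop_poly_of_fin_num s x : s != [::] -> trop_poly_of s x \is a fin_num.
Proof.
case: s => // m s _; rewrite /trop_poly_of.
rewrite -(big_map (fun m => m.1 + \sum_(i < n) ((m.2 i)%:R * x i))%R xpredT EFin).
by apply: bigmaxe_fin_num; apply: map_f; exact: mem_head.
Qed.

Lemma trop_poly_cases (p : tfun n) : trop_poly p ->
  p = tcst -oo \/ forall x, p x \is a fin_num.
Proof.
move=> /trop_polyP [[|m s] ->]; first by left; exact: trop_poly_of_nil.
by right=> x; exact: trop_poly_of_fin_num.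
Qed.

Lemma trop_monomial_mul (c d : R) (a b : 'I_n -> nat) :
  trop_monomial (c + d)%R (fun i => a i + b i)%N =
  tmul (trop_monomial c a) (trop_monomial d b).
Proof.
apply: funext => x; rewrite /tmul /trop_monomial -EFinD; congr EFin.
under eq_bigr do rewrite natrD mulrDl.
by rewrite big_split /= addrACA.
Qed.

Lemma trop_poly_tadd (p q : tfun n) : trop_poly p -> trop_poly q -> trop_poly (tadd p q).
Proof.
move=> /trop_polyP [s ->] /trop_polyP [t ->]; apply/trop_polyP; exists (s ++ t).
by apply: funext => x; rewrite /tadd /trop_poly_of big_cat.
Qed.

Lemma trop_poly_tmul (p q : tfun n) : trop_poly p -> trop_poly q -> trop_poly (tmul p q).
Proof.
move=> /trop_polyP [s ->] /trop_polyP [t ->]; apply/trop_polyP.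
exists [seq (m.1 + k.1, fun i => m.2 i + k.2 i)%R | m <- s, k <- t].
apply: funext => x; rewrite /tmul /trop_poly_of big_allpairs_dep bigmaxeDl.
apply: eq_bigr => m _; rewrite bigmaxeDr; apply: eq_bigr => k _.
by rewrite trop_monomial_mul.
Qed.

End TropicalPolynomials.

Section TropicalRationalFunctions.
Variable n : nat.

Lemma trop_ratI (f p q : tfun n) : trop_poly p -> trop_poly q ->
  (forall x, q x \is a fin_num) -> (forall x, f x = p x - q x) -> trop_rat f.
Proof.
move=> hp hq q_fin hf; exists p, q; split=> // q_bot.
by have := q_fin (fun _ => 0%R); rewrite q_bot.
Qed.

Lemma trop_rat_repr (f : tfun n) : trop_rat f ->
  exists p q, [/\ trop_poly p, trop_poly q, (forall x, q x \is a fin_num)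
                & forall x, f x = p x - q x].
Proof.
move=> [p [q [hp hq q_bot hf]]]; exists p, q; split=> //.
by case: (trop_poly_cases hq).
Qed.

Lemma trop_poly_neq_pinfty (p : tfun n) x : trop_poly p -> p x != +oo.
Proof. by case/trop_poly_cases => [->|/(_ x)/fin_numPlt/andP[_ /lt_eqF ->]]. Qed.

Lemma trop_rat_neq_pinfty (f : tfun n) x : trop_rat f -> f x != +oo.
Proof.
move=> /trop_rat_repr [p [q [hp _ q_fin ->]]].
have := trop_poly_neq_pinfty x hp; rewrite -(fineK (q_fin x)).
by case: (p x) => [r| |].
Qed.

Lemma trop_poly_tcst (c : \bar R) : is_trop_scalar c -> trop_poly (@tcst n c).
Proof.
case: c => [r| |] // _; apply/trop_polyP.
  exists [:: (r, fun _ => 0%N)]; apply: funext => x.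
  rewrite /trop_poly_of /tcst /trop_monomial big_seq1 big1 ?addr0 // => i _.
  by rewrite mul0r.
by exists [::]; rewrite trop_poly_of_nil.
Qed.

Lemma trop_poly_rat (p : tfun n) : trop_poly p -> trop_rat p.
Proof.
move=> hp; apply: (@trop_ratI _ p (tcst 0)) => //; first exact: trop_poly_tcst.
by move=> x; rewrite /tcst sube0.
Qed.

Lemma trop_rat_tcst (c : \bar R) : is_trop_scalar c -> trop_rat (@tcst n c).
Proof. by move=> hc; apply/trop_poly_rat/trop_poly_tcst. Qed.

Lemma trop_var_poly (i : 'I_n) : trop_poly (trop_var i).
Proof.
apply/trop_polyP; exists [:: (0%R, fun j => (j == i) : nat)]; apply: funext => x.
rewrite /trop_poly_of big_seq1 /trop_monomial /trop_var add0r (bigD1 i) //=.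
by rewrite eqxx mul1r big1 ?addr0 // => j /negbTE ->; rewrite mul0r.
Qed.

Lemma trop_var_rat (i : 'I_n) : trop_rat (trop_var i).
Proof. exact/trop_poly_rat/trop_var_poly. Qed.

Lemma trop_var_inv_rat (i : 'I_n) : trop_rat (fun x => (- x i)%:E).
Proof.
apply: (@trop_ratI _ (tcst 0) (trop_var i)) => //; first exact: trop_poly_tcst.
  exact: trop_var_poly.
by move=> x; rewrite /tcst sub0e.
Qed.

Lemma trop_rat_tadd (f g : tfun n) : trop_rat f -> trop_rat g -> trop_rat (tadd f g).
Proof.
move=> /trop_rat_repr [p1 [q1 [hp1 hq1 q1_fin hf]]].
move=> /trop_rat_repr [p2 [q2 [hp2 hq2 q2_fin hg]]].
apply: (@trop_ratI _ (tadd (tmul p1 q2) (tmul p2 q1)) (tmul q1 q2)).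
- by apply: trop_poly_tadd; apply: trop_poly_tmul.
- exact: trop_poly_tmul.
- by move=> x; rewrite fin_numD q1_fin q2_fin.
move=> x; rewrite /tadd /tmul hf hg -(fineK (q1_fin x)) -(fineK (q2_fin x)).
rewrite adde_maxl; congr maxe; first by rewrite addeKB.
by rewrite [X in _ = _ - X]addeC addeKB.
Qed.

Lemma trop_rat_tmul (f g : tfun n) : trop_rat f -> trop_rat g -> trop_rat (tmul f g).
Proof.
move=> /trop_rat_repr [p1 [q1 [hp1 hq1 q1_fin hf]]].
move=> /trop_rat_repr [p2 [q2 [hp2 hq2 q2_fin hg]]].
apply: (@trop_ratI _ (tmul p1 p2) (tmul q1 q2)); try exact: trop_poly_tmul.
  by move=> x; rewrite fin_numD q1_fin q2_fin.
by move=> x; rewrite /tmul hf hg -(fineK (q1_fin x)) -(fineK (q2_fin x)) addeBB.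
Qed.

Definition trop_word (c : R) (w : seq 'I_n) : tfun n :=
  fun x => ((c + \sum_(i <- w) x i)%R)%:E.

Lemma trop_word_nil c : trop_word c [::] = tcst c%:E.
Proof. by apply: funext => x; rewrite /trop_word big_nil addr0. Qed.

Lemma trop_word_cons c j w : trop_word c (j :: w) = tmul (trop_word c w) (trop_var j).
Proof.
apply: funext => x; rewrite /trop_word /tmul /trop_var -EFinD big_cons.
by rewrite addrA addrAC.
Qed.

Lemma trop_word_rat c w : trop_rat (trop_word c w).
Proof.
elim: w => [|j w IH]; first by rewrite trop_word_nil; exact: trop_rat_tcst.
by rewrite trop_word_cons; apply: trop_rat_tmul IH (trop_var_rat j).
Qed.

Lemma trop_monomial_word (c : R) (a : 'I_n -> nat) :
  trop_monomial c a = trop_word c (flatten [seq nseq (a i) i | i <- index_enum 'I_n]).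
Proof.
apply: funext => x; rewrite /trop_monomial /trop_word big_flatten big_map.
by congr (_ + _)%:E; apply: eq_bigr => i _; rewrite big_nseq iter_addr addr0 mulr_natl.
Qed.

Lemma trop_monomial_rat (c : R) (a : 'I_n -> nat) : trop_rat (trop_monomial c a).
Proof. by rewrite trop_monomial_word; exact: trop_word_rat. Qed.

End TropicalRationalFunctions.

Section TropicalCharacters.
Variables (n : nat) (ev : tfun n -> \bar R).
Hypothesis ev_tadd : forall f g, trop_rat f -> trop_rat g ->
  ev (tadd f g) = maxe (ev f) (ev g).
Hypothesis ev_tmul : forall f g, trop_rat f -> trop_rat g ->
  ev (tmul f g) = ev f + ev g.
Hypothesis ev_tcst : forall c, is_trop_scalar c -> ev (tcst c) = c.

Definition character_point : pt n := fun i => fine (ev (trop_var i)).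

Lemma ev_trop_var i : ev (trop_var i) = (character_point i)%:E.
Proof.
have := ev_tmul (trop_var_rat i) (trop_var_inv_rat i).
have -> : tmul (trop_var i) (fun x => (- x i)%:E) = tcst 0.
  by apply: funext => x; rewrite /tmul /trop_var -EFinD subrr.
by rewrite ev_tcst // /character_point; case: (ev (trop_var i)); case: (ev _).
Qed.

Lemma ev_trop_word c w : ev (trop_word c w) = trop_word c w character_point.
Proof.
elim: w => [|j w IH]; first by rewrite trop_word_nil ev_tcst.
rewrite trop_word_cons ev_tmul ?IH ?ev_trop_var //.
  exact: trop_word_rat.
exact: trop_var_rat.
Qed.

Lemma ev_trop_poly p : trop_poly p -> ev p = p character_point.
Proof.
move=> /trop_polyP [s ->]; elim: s => [|m s IH].
  by rewrite trop_poly_of_nil ev_tcst.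
have poly_rat : trop_rat (trop_poly_of s) by exact/trop_poly_rat/trop_poly_of_poly.
have mono_rat := trop_monomial_rat m.1 m.2.
by rewrite trop_poly_of_cons ev_tadd // IH trop_monomial_word ev_trop_word.
Qed.

Lemma ev_trop_rat f : trop_rat f -> ev f = f character_point.
Proof.
move=> hf; have [p [q [hp hq q_fin f_pq]]] := trop_rat_repr hf.
have fq_p : tmul f q = p.
  by apply: funext => x; rewrite /tmul f_pq subeK.
have := ev_tmul hf (trop_poly_rat hq).
rewrite fq_p (ev_trop_poly hp) (ev_trop_poly hq) => p_eq.
by rewrite f_pq p_eq addeK.
Qed.

End TropicalCharacters.

Section QuotientHomomorphisms.
Variables (n m : nat) (E : tfun n -> tfun n -> Prop) (F : tfun m -> tfun m -> Prop).
Variable phi : tfun n -> tfun m.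
Hypothesis phi_hom : talg_hom_quot E F phi.

Lemma phi_tcst_tvar y c : tvar F y -> is_trop_scalar c -> phi (tcst c) y = c.
Proof. by case: phi_hom => _ _ _ _ phi_cst Fy hc; rewrite (Fy _ _ (phi_cst c hc)). Qed.

Lemma phi_eval_tvar y : congruence E -> tvar F y ->
  exists2 x, tvar E x & forall f, trop_rat f -> phi f y = f x.
Proof.
case: phi_hom => _ phi_E phi_add phi_mul _ [E_rat _] Fy.
pose ev f := phi f y.
have ev_rat f : trop_rat f -> ev f = f (character_point ev).
  apply: ev_trop_rat => [g h hg hh|g h hg hh|c hc].
  - by rewrite /ev (Fy _ _ (phi_add _ _ hg hh)).
  - by rewrite /ev (Fy _ _ (phi_mul _ _ hg hh)).
  - exact: phi_tcst_tvar.
exists (character_point ev) => // f g fEg.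
have [hf hg] := E_rat _ _ fEg.
by rewrite -(ev_rat _ hf) -(ev_rat _ hg); exact: Fy _ _ (phi_E _ _ fEg).
Qed.

Lemma image_phi_tvar_sub f : congruence E -> trop_rat f ->
  [set phi f y | y in tvar F] `<=` [set f x | x in tvar E].
Proof.
move=> congrE hf _ [y Fy <-]; have [x Ex phi_x] := phi_eval_tvar congrE Fy.
by exists x; rewrite ?phi_x.
Qed.

Hypothesis phi_inj : hom_quot_injective E F phi.
Hypothesis F_tideal : forall f g, tideal (tvar F) f g -> F f g.

Lemma phi_le_reflect f g : trop_rat f -> trop_rat g ->
  (forall y, tvar F y -> phi f y <= phi g y) -> forall x, tvar E x -> f x <= g x.
Proof.
case: phi_hom => phi_rat _ phi_add _ _ hf hg le_fg x Ex.
have fgEg : E (tadd f g) g.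
  apply: phi_inj; [exact: trop_rat_tadd | by [] |].
  apply: F_tideal; split; [exact/phi_rat/trop_rat_tadd | exact: phi_rat |].
  by move=> y Fy; rewrite (Fy _ _ (phi_add _ _ hf hg)) /tadd; apply/max_r/le_fg.
by rewrite -(Ex _ _ fgEg) /tadd le_max lexx.
Qed.

Lemma ereal_sup_tvar_le_phi f : trop_rat f ->
  ereal_sup [set f x | x in tvar E] <= ereal_sup [set phi f y | y in tvar F].
Proof.
move=> hf; set s := ereal_sup [set phi f y | y in tvar F].
have [->|/eqP s_fin] := eqVneq s +oo; first exact: leey.
have le_s y : tvar F y -> phi f y <= phi (tcst s) y.
  by move=> Fy; rewrite phi_tcst_tvar //; apply: ereal_sup_ubound; exists y.
apply: ge_ereal_sup => _ [x Ex <-].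
exact: (phi_le_reflect hf (trop_rat_tcst n s_fin) le_s Ex).
Qed.

Lemma ereal_inf_phi_le_tvar f : tvar F !=set0 -> trop_rat f ->
  ereal_inf [set phi f y | y in tvar F] <= ereal_inf [set f x | x in tvar E].
Proof.
move=> [y0 Fy0] hf; set s := ereal_inf [set phi f y | y in tvar F].
have s_fin : is_trop_scalar s.
  move=> s_pinfty; have : s <= phi f y0 by apply: ereal_inf_lbound; exists y0.
  rewrite s_pinfty leye_eq; apply/negP/trop_rat_neq_pinfty.
  by case: phi_hom => phi_rat _ _ _ _; exact: phi_rat.
have ge_s y : tvar F y -> phi (tcst s) y <= phi f y.
  by move=> Fy; rewrite phi_tcst_tvar //; apply: ereal_inf_lbound; exists y.
apply: le_ereal_inf_tmp => _ [x Ex <-].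
exact: (phi_le_reflect (trop_rat_tcst n s_fin) hf ge_s Ex).
Qed.

End QuotientHomomorphisms.

Theorem corollary3p17 (n m : nat) (E : tfun n -> tfun n -> Prop)
    (F : tfun m -> tfun m -> Prop) (phi : tfun n -> tfun m) :
  congruence E -> congruence F -> talg_hom_quot E F phi ->
  (forall f : tfun n, trop_rat f ->
     ereal_sup [set phi f y | y in tvar F] <= ereal_sup [set f x | x in tvar E] /\
     ereal_inf [set f x | x in tvar E] <= ereal_inf [set phi f y | y in tvar F]) /\
  (tvar F !=set0 -> hom_quot_injective E F phi ->
   (forall f g, F f g <-> tideal (tvar F) f g) ->
   forall f : tfun n, trop_rat f ->
     ereal_sup [set f x | x in tvar E] = ereal_sup [set phi f y | y in tvar F] /\
     ereal_inf [set f x | x in tvar E] = ereal_inf [set phi f y | y in tvar F]).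
Proof.
move=> congrE _ phi_hom.
have image_sub f : trop_rat f -> [set phi f y | y in tvar F] `<=` [set f x | x in tvar E].
  exact: image_phi_tvar_sub.
split=> [f hf|F_ne phi_inj F_eq f hf].
  by split; [apply: ereal_sup_le | apply: ereal_inf_le_tmp]; exact: image_sub.
have F_tideal g h : tideal (tvar F) g h -> F g h by move/F_eq.
split; apply/le_anti/andP; split.
- exact: ereal_sup_tvar_le_phi phi_hom phi_inj F_tideal _ hf.
- exact/ereal_sup_le/image_sub.
- exact/ereal_inf_le_tmp/image_sub.
- exact: ereal_inf_phi_le_tvar phi_hom phi_inj F_tideal _ F_ne hf.
Qed.
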